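(* With respect to the box topology on $\mathcal{X}_*$, there is no continuous map $r\colon\mathcal{X}_*\to\mathbb{R}_+$ that is $1$-homogeneous, i.e. satisfies $r(tX)=t\,r(X)$ for all $t>0$ and $X\in\mathcal{X}_*$.
   Context: mm-spaces are triples $(X,d_X,\mu_X)$ with $(X,d_X)$ complete separable metric and $\mu_X$ a Borel probability measure, with $X=\operatorname{supp}\mu_X$. $\mathcal{X}$ is the set of their isomorphism classes under measure-preserving isometries of supports. Box distance: $\square(X,Y)$ is the infimum of $\varepsilon\ge0$ such that there exist Borel maps $\varphi,\psi$ from $[0,1)$ pushing Lebesgue measure to $\mu_X,\mu_Y$ and a Borel $I_0$ of measure $\ge1-\varepsilon$ with $|d_X(\varphi(s),\varphi(t))-d_Y(\psi(s),\psi(t))|\le\varepsilon$ on $I_0$. It induces the box topology. $tX=(X,t\,d_X,\mu_X)$ for $t\in\mathbb{R}_+=(0,\infty)$. $\mathcal{X}_*=\mathcal{X}\setminus\{*\}$, where $*$ is the one-point space. *)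

From HB Require Import structures.
From mathcomp Require Import all_boot all_order all_algebra.
From mathcomp Require Import all_classical all_reals all_analysis.
Import Order.TTheory GRing.Theory Num.Theory.
Import numFieldNormedType.Exports.

Set Implicit Arguments.
Unset Strict Implicit.
Unset Printing Implicit Defensive.

Local Open Scope classical_set_scope.
Local Open Scope ring_scope.

Section MM.
Variable R : realType.

Definition mball (T : Type) (d : T -> T -> R) (x : T) (e : R) : set T :=
  [set y | d x y < e].
Definition dopen (T : Type) (d : T -> T -> R) (A : set T) : Prop :=
  forall x, A x -> exists2 e, 0 < e & mball d x e `<=` A.
Definition dborel (T : Type) (d : T -> T -> R) : set (set T) :=
  <<s [set A | dopen d A] >>.

Record mm_axioms (T : Type) (d : T -> T -> R) (mu : set T -> R) : Prop := {
  mm_ge0 : forall x y, 0 <= d x y;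
  mm_eq0 : forall x y, d x y = 0 <-> x = y;
  mm_sym : forall x y, d x y = d y x;
  mm_tri : forall x y z, d x z <= d x y + d y z;
  mm_complete : forall u : nat -> T,
    (forall e, 0 < e -> exists N, forall m n, (N <= m)%N -> (N <= n)%N ->
        d (u m) (u n) < e) ->
    exists x, forall e, 0 < e -> exists N, forall n, (N <= n)%N -> d (u n) x < e;
  mm_separable : exists f : nat -> T,
    forall x e, 0 < e -> exists n, d x (f n) < e;
  mm_mu_ge0 : forall A, dborel d A -> 0 <= mu A;
  mm_mu_setT : mu setT = 1;
  mm_mu_sigma_additive : forall F : nat -> set T,
    (forall i, dborel d (F i)) -> trivIset setT F ->
    (fun n => \sum_(i < n) mu (F i)) @ \oo --> mu (\bigcup_i F i);
  mm_full_support : forall x e, 0 < e -> 0 < mu (mball d x e)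
}.

Record mmspace := MMSpace {
  mm_T : Type;
  mm_d : mm_T -> mm_T -> R;
  mm_mu : set mm_T -> R;
  mm_ax : mm_axioms mm_d mm_mu
}.
Arguments mm_d : clear implicits.
Arguments mm_mu : clear implicits.

(* X is not (isomorphic to) the one-point mm-space *)
Definition nontrivial (X : mmspace) : Prop :=
  exists x y : mm_T X, x <> y.

Definition unit_interval : set R := [set s | 0 <= s < 1].

Definition parametrization (X : mmspace) (phi : R -> mm_T X) : Prop :=
  forall A, dborel (mm_d X) A ->
    measurable (unit_interval `&` phi @^-1` A) /\
    lebesgue_measure (unit_interval `&` phi @^-1` A) = (mm_mu X A)%:E.

Definition box (X Y : mmspace) : R :=
  inf [set e : R | 0 <= e /\
    exists (phi : R -> mm_T X) (psi : R -> mm_T Y) (I0 : set R),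
      [/\ parametrization phi, parametrization psi,
          measurable I0 /\ I0 `<=` unit_interval,
          ((1 - e)%:E <= lebesgue_measure I0)%E &
          forall s t, I0 s -> I0 t ->
            `|mm_d X (phi s) (phi t) - mm_d Y (psi s) (psi t)| <= e]].

Lemma mball_scale (T : Type) (d : T -> T -> R) (t : R) (ht : 0 < t) x e :
  mball (fun x y => t * d x y) x e = mball d x (e / t).
Proof.
rewrite /mball; apply/seteqP; split => y /=.
  by move=> h; rewrite ltr_pdivlMr // mulrC.
by rewrite ltr_pdivlMr // mulrC.
Qed.

Lemma dopen_scale (T : Type) (d : T -> T -> R) (t : R) (ht : 0 < t) :
  dopen (fun x y => t * d x y) = dopen d.
Proof.
apply/funext => A; apply/propext; split => h x Ax.
  have [e e0 he] := h x Ax; exists (e / t); first by rewrite divr_gt0.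
  by rewrite -mball_scale.
have [e e0 he] := h x Ax; exists (e * t); first by rewrite mulr_gt0.
by rewrite mball_scale // mulfK // gt_eqF.
Qed.

Lemma dborel_scale (T : Type) (d : T -> T -> R) (t : R) (ht : 0 < t) :
  dborel (fun x y => t * d x y) = dborel d.
Proof. by rewrite /dborel dopen_scale. Qed.

Lemma mm_axioms_scale (T : Type) (d : T -> T -> R) (mu : set T -> R)
  (t : R) (ht : 0 < t) :
  mm_axioms d mu -> mm_axioms (fun x y => t * d x y) mu.
Proof.
case=> h0 h1 h2 h3 hc hs m0 m1 m2 m3; split.
- by move=> x y; rewrite mulr_ge0 // ltW.
- move=> x y; rewrite -h1; split; last by move=> ->; rewrite mulr0.
  by move/eqP; rewrite mulf_eq0 gt_eqF //= => /eqP.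
- by move=> x y; rewrite h2.
- by move=> x y z; rewrite -mulrDr ler_wpM2l // ltW.
- move=> u hu; have [x hx] : exists x, forall e, 0 < e -> exists N,
      forall n, (N <= n)%N -> d (u n) x < e.
    apply: hc => e e0; have [N hN] := hu (e * t) (mulr_gt0 e0 ht).
    by exists N => m n hm hn; rewrite -(ltr_pM2l ht) [t * e]mulrC; apply: hN.
  exists x => e e0; have [N hN] := hx (e / t) (divr_gt0 e0 ht).
  by exists N => n hn; rewrite mulrC -ltr_pdivlMr //; apply: hN.
- have [f hf] := hs; exists f => x e e0.
  have [n hn] := hf x (e / t) (divr_gt0 e0 ht).
  by exists n; rewrite mulrC -ltr_pdivlMr.
- by rewrite dborel_scale.
- exact: m1.
- by rewrite dborel_scale.
- by move=> x e e0; rewrite mball_scale //; apply: m3; rewrite divr_gt0.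
Qed.

Definition scale (t : R) (ht : 0 < t) (X : mmspace) : mmspace :=
  @MMSpace (mm_T X) (fun x y => t * mm_d X x y) (mm_mu X)
    (mm_axioms_scale ht (mm_ax X)).

End MM.

From mathcomp Require Import all_boot all_order all_algebra.
From mathcomp Require Import all_classical all_reals all_analysis.
From mathcomp Require Import lra.
Import Order.TTheory GRing.Theory Num.Theory.
Local Open Scope ring_scope.
Local Open Scope classical_set_scope.
Set Implicit Arguments.
Unset Strict Implicit.

(* Let C be the two-point space with masses 1/2, 1/2 at distance 1, and V the
   three-point space with masses p, 1/2 - p, 1/2 where the last two points are
   eps apart and both at distance 1 from the first.  As eps -> 0, V tends to the
   two-point space X_p with masses p, 1 - p, whereas the blow-up V/eps stays
   within box distance p of C (forget the point of mass p).  Fixing p by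
   continuity of r at C and then eps by continuity at X_p, r(V/eps) = r(V)/eps
   remains close to r(C) while r(V) remains close to r(X_p) > 0: impossible once
   eps is small. *)

Section FiniteMMSpace.
Variables (R : realType) (T : finType).
Implicit Types (w : T -> R) (d : T -> T -> R).

Definition finmu w (A : set T) : R := \sum_(x | `[< A x >]) w x.

Lemma finmu_fsbig w A : finmu w A = \sum_(x \in A) w x.
Proof.
rewrite /finmu (bigfs _ _ (r := index_enum T)) ?index_enum_uniq //.
  apply: eq_fsbigl; apply/seteqP.
  by split => x; rewrite /= unfold_in => /asboolP.
by move=> x _; rewrite mem_index_enum.
Qed.

Lemma finite_metric_min_dist d :
  (forall x y, 0 <= d x y) -> (forall x y, d x y = 0 <-> x = y) ->
  exists2 m, 0 < m & forall x y, x <> y -> m <= d x y.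
Proof.
move=> d_ge0 d_eq0.
have d_gt0 x y : x != y -> 0 < d x y.
  by move=> /eqP xy; rewrite lt_def d_ge0 andbT; apply/eqP => /d_eq0.
exists (\big[Num.min/1]_(xy : T * T | xy.1 != xy.2) d xy.1 xy.2).
  by apply: lt_bigmin => // -[x y] /d_gt0.
by move=> x y /eqP xy; exact: (@bigmin_le_cond _ _ _ (1 : R) (x, y)).
Qed.

Lemma fin_mm_axioms w d :
  (forall x, 0 < w x) -> \sum_x w x = 1 ->
  (forall x y, 0 <= d x y) -> (forall x y, d x y = 0 <-> x = y) ->
  (forall x y, d x y = d y x) -> (forall x y z, d x z <= d x y + d y z) ->
  mm_axioms d (finmu w).
Proof.
move=> w_gt0 w_sum1 d_ge0 d_eq0 d_sym d_tri.
have dxx x : d x x = 0 by apply/d_eq0.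
have [x0 _] : exists x0 : T, True.
  apply: contrapT => T0; move: w_sum1; rewrite big1 => [/esym/eqP|x _].
    by rewrite oner_eq0.
  by case: T0; exists x.
split => //.
- move=> u u_cauchy; have [m m_gt0 m_sep] := finite_metric_min_dist d_ge0 d_eq0.
  have [N uN] := u_cauchy m m_gt0.
  have u_cst k : (N <= k)%N -> u k = u N.
    by move=> Nk; apply: contrapT => /m_sep; rewrite leNgt uN.
  by exists (u N) => e e_gt0; exists N => k /u_cst ->; rewrite dxx.
- exists (nth x0 (enum T)) => x e e_gt0; exists (index x (enum T)).
  by rewrite nth_index ?mem_enum // dxx.
- by move=> A _; apply: sumr_ge0 => x _; apply: ltW.
- by rewrite -w_sum1; apply: eq_bigl => x; apply/asboolP.
- move=> F _ F_disj.
  have ev_cst x : exists N, forall k, (N <= k)%N ->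
      \sum_(i < k) (if `[< F i x >] then w x else 0) =
      (if `[< (\bigcup_i F i) x >] then w x else 0).
    case: (pselect ((\bigcup_i F i) x)) => [[j _ Fjx]|Fx].
    + rewrite asboolT; last by exists j.
      exists j.+1 => k jk; rewrite (bigD1 (Ordinal jk)) //= asboolT //.
      rewrite big1 ?addr0 // => i /eqP ij; case: asboolP => // Fix.
      by case: ij; apply/val_inj; apply: (F_disj i j) => //; exists x.
    + rewrite asboolF //; exists 0%N => k _; apply: big1 => i _.
      by case: asboolP => // Fix; case: Fx; exists i.
  have [N N_cst] := choice ev_cst.
  apply: cvg_near_cst; exists (\max_x N x)%N => // k /= Nk.
  rewrite /finmu [RHS]big_mkcond; under eq_bigr do rewrite big_mkcond.
  rewrite exchange_big; apply: eq_bigr => x _; apply: N_cst.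
  exact: leq_trans (leq_bigmax x) Nk.
- move=> x e e_gt0; rewrite /finmu (bigD1 x) /=; last first.
    by apply/asboolP; rewrite /mball /= dxx.
  by rewrite ltr_pwDl ?w_gt0 // sumr_ge0 // => y _; apply: ltW.
Qed.

Lemma fin_parametrization w (phi : R -> T) :
  (forall x, measurable (@unit_interval R `&` phi @^-1` [set x]) /\
     lebesgue_measure (@unit_interval R `&` phi @^-1` [set x]) = (w x)%:E) ->
  forall A, measurable (@unit_interval R `&` phi @^-1` A) /\
     lebesgue_measure (@unit_interval R `&` phi @^-1` A) = (finmu w A)%:E.
Proof.
move=> phi_w A; pose fiber x := @unit_interval R `&` phi @^-1` [set x].
have -> : @unit_interval R `&` phi @^-1` A = \bigcup_(x in A) fiber x.
  apply/seteqP; split => [s [Us As]|s [x Ax [Us /= phix]]].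
    by exists (phi s) => //; split.
  by split => //; rewrite /preimage /= phix.
have fiber_disj : trivIset A fiber.
  by move=> x y _ _ [s [[_ /= <-] [_ /= <-]]].
have fiber_meas x : A x -> measurable (fiber x) by move=> _; exact: (phi_w x).1.
split; first exact: fin_bigcup_measurable finite_finset fiber_meas.
rewrite measure_fin_bigcup //; last exact: finite_finset.
rewrite finmu_fsbig -fsumEFin; last exact: finite_finset.
by apply: eq_fsbigr => x _; exact: (phi_w x).2.
Qed.

End FiniteMMSpace.

Section IntervalFibers.
Variable R : realType.

Lemma lebesgue_measure_itv_co (a b : R) : a <= b ->
  lebesgue_measure `[a, b[%classic = (b - a)%:E.
Proof.
rewrite lebesgue_measure_itv /= lte_fin EFinB.
by case: ltgtP => // -> _; rewrite subee.
Qed.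

Lemma unit_interval_itv : @unit_interval R = `[0, 1[%classic.
Proof. by apply/seteqP; split => s; rewrite /unit_interval /= in_itv. Qed.

Lemma lebesgue_fiber_itv (T : eqType) (phi : R -> T) (x : T) (a b : R) :
  0 <= a -> a <= b -> b <= 1 ->
  (forall s, 0 <= s < 1 -> (phi s == x) = (a <= s < b)) ->
  measurable (@unit_interval R `&` phi @^-1` [set x]) /\
  lebesgue_measure (@unit_interval R `&` phi @^-1` [set x]) = (b - a)%:E.
Proof.
move=> a_ge0 ab b_le1 phi_itv.
have -> : @unit_interval R `&` phi @^-1` [set x] = `[a, b[%classic.
  apply/seteqP; split => s; rewrite /= in_itv /=.
    by move=> [s01 /eqP]; rewrite phi_itv.
  move=> /andP[a_s s_b]; have s01 : 0 <= s < 1.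
    by apply/andP; split; [exact: le_trans a_s | exact: lt_le_trans b_le1].
  by split => //; apply/eqP; rewrite phi_itv // a_s s_b.
by split; [exact: measurable_itv | exact: lebesgue_measure_itv_co].
Qed.

End IntervalFibers.

Lemma box_le (R : realType) (X Y : mmspace R) (e : R) phi psi (I0 : set R) :
  0 <= e -> parametrization phi -> parametrization psi ->
  measurable I0 -> I0 `<=` @unit_interval R ->
  ((1 - e)%:E <= lebesgue_measure I0)%E ->
  (forall s t, I0 s -> I0 t ->
      `|@mm_d R X (phi s) (phi t) - @mm_d R Y (psi s) (psi t)| <= e) ->
  box X Y <= e.
Proof.
move=> e_ge0 phiP psiP I0_meas I0_sub I0_big I0_close.
apply: ge_inf; first by exists 0 => y [].
by split => //; exists phi, psi, I0.
Qed.

Lemma parametrization_scale (R : realType) (X : mmspace R) (t : R) (ht : 0 < t)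
    (phi : R -> mm_T X) :
  parametrization phi -> parametrization (X := scale ht X) phi.
Proof. by move=> phiP A; rewrite /= dborel_scale //; exact: phiP. Qed.

Lemma half_in_unit (R : realType) : 0 < (2^-1 : R) < 1.
Proof. by apply/andP; split; lra. Qed.

Section ExampleSpaces.
Variable R : realType.

Definition two_point_weight (a : R) (b : bool) : R := if b then a else 1 - a.
Definition two_point_dist (b c : bool) : R := (b != c)%:R.

Lemma two_point_axioms (a : R) :
  0 < a < 1 -> mm_axioms two_point_dist (finmu (two_point_weight a)).
Proof.
move=> /andP[a_gt0 a_lt1]; apply: fin_mm_axioms.
- by case; rewrite /two_point_weight ?subr_gt0.
- by rewrite big_bool /= addrC subrK.
- by move=> b c; rewrite ler0n.
- by move=> [] []; split => //= /eqP; rewrite oner_eq0.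
- by move=> b c; rewrite /two_point_dist eq_sym.
- by move=> [] [] [] /=; rewrite /two_point_dist /=; lra.
Qed.

Definition two_point (a : R) (ha : 0 < a < 1) : mmspace R :=
  MMSpace (two_point_axioms ha).

Lemma two_point_nontrivial (a : R) (ha : 0 < a < 1) : nontrivial (two_point ha).
Proof. by exists true, false. Qed.

Definition three_point_weight (p : R) (x : option bool) : R :=
  if x is Some b then (if b then 2^-1 - p else 2^-1) else p.
Definition three_point_dist (eps : R) (x y : option bool) : R :=
  match x, y with
  | Some b, Some c => eps * two_point_dist b c
  | None, None => 0
  | _, _ => 1
  end.

Lemma three_point_axioms (p eps : R) : 0 < p < 2^-1 -> 0 < eps <= 1 ->
  mm_axioms (three_point_dist eps) (finmu (three_point_weight p)).
Proof.
move=> /andP[p_gt0 p_lt] /andP[eps_gt0 eps_le1].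
rewrite /three_point_dist /two_point_dist; apply: fin_mm_axioms.
- by case=> [[]|] /=; lra.
- rewrite (bigD1 None) // (bigD1 (Some true)) // (bigD1 (Some false)) //.
  by rewrite big_pred0 => [/=|[[]|]] //; lra.
- by move=> [[]|] [[]|] /=; lra.
- move=> [[]|] [[]|] /=; split => // /eqP;
    by rewrite ?mulr0 ?mulr1 ?oner_eq0 ?gt_eqF.
- by move=> [[]|] [[]|].
- by move=> [[]|] [[]|] [[]|] /=; lra.
Qed.

Definition three_point (p eps : R) (hp : 0 < p < 2^-1) (heps : 0 < eps <= 1) :
  mmspace R := MMSpace (three_point_axioms hp heps).

Lemma three_point_nontrivial (p eps : R) (hp : 0 < p < 2^-1)
    (heps : 0 < eps <= 1) :
  nontrivial (three_point hp heps).
Proof. by exists None, (Some true). Qed.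

End ExampleSpaces.

Section BoxEstimates.
Variable R : realType.

Definition two_point_param (a s : R) : bool := s < a.
Definition three_point_param (p s : R) : option bool :=
  if s < p then None else Some (s < 2^-1).

Lemma two_point_parametrization (a : R) (ha : 0 < a < 1) :
  parametrization (X := two_point ha) (two_point_param a).
Proof.
have /andP[a_gt0 a_lt1] := ha; move=> A _; apply: fin_parametrization => -[].
- rewrite -[a]subr0; apply: lebesgue_fiber_itv; rewrite ?subr0; try lra.
  by move=> s /andP[s_ge0 _]; rewrite /two_point_param s_ge0.
- apply: lebesgue_fiber_itv; try lra.
  by move=> s /andP[_ s_lt1]; rewrite /two_point_param s_lt1 andbT leNgt.
Qed.

Lemma three_point_parametrization (p eps : R) (hp : 0 < p < 2^-1)
    (heps : 0 < eps <= 1) :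
  parametrization (X := three_point hp heps) (three_point_param p).
Proof.
have /andP[p_gt0 p_lt] := hp; move=> A _.
apply: fin_parametrization => -[[]|].
- apply: lebesgue_fiber_itv; try lra.
  by move=> s _; rewrite /three_point_param; case: ltP => //= ps; rewrite ps.
- rewrite [X in (X%:E)](_ : _ = 1 - 2^-1); last by rewrite /=; lra.
  apply: lebesgue_fiber_itv; try lra.
  move=> s /andP[_ s_lt1]; rewrite /three_point_param s_lt1 andbT.
  by case: ltP => //= sp; rewrite leNgt; case: ltP => //; lra.
- rewrite -[p]subr0; apply: lebesgue_fiber_itv; rewrite ?subr0; try lra.
  by move=> s /andP[s_ge0 _]; rewrite /three_point_param s_ge0; case: ltP.
Qed.

Lemma box_two_point_three_point (p eps : R) (hp1 : 0 < p < 1)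
    (hp : 0 < p < 2^-1) (heps : 0 < eps <= 1) :
  box (two_point hp1) (three_point hp heps) <= eps.
Proof.
have /andP[eps_gt0 _] := heps.
apply: (box_le (I0 := @unit_interval R) (ltW eps_gt0)) => //.
- exact: two_point_parametrization.
- exact: three_point_parametrization.
- by rewrite unit_interval_itv; exact: measurable_itv.
- by rewrite unit_interval_itv lebesgue_measure_itv_co // lee_fin; lra.
move=> s t _ _ /=; rewrite /two_point_param /three_point_param /two_point_dist.
by case: (s < p); case: (t < p); case: (s < 2^-1); case: (t < 2^-1);
  rewrite /= ?mulr0 ?mulr1 ?subrr ?normr0 ?sub0r ?normrN ?gtr0_norm //; lra.
Qed.

Lemma box_two_point_blowup (p t : R) (hp : 0 < p < 2^-1) (ht : 0 < t)
    (heps : 0 < t^-1 <= 1) :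
  box (two_point (half_in_unit R)) (scale ht (three_point hp heps)) <= p.
Proof.
have /andP[p_gt0 p_lt] := hp.
apply: (box_le (I0 := `[p, 1[%classic) (ltW p_gt0)).
- exact: two_point_parametrization.
- exact/parametrization_scale/three_point_parametrization.
- exact: measurable_itv.
- move=> s; rewrite /= in_itv unit_interval_itv /= in_itv /=.
  by move=> /andP[? ->]; lra.
- by rewrite lebesgue_measure_itv_co //; lra.
move=> s t'; rewrite /= !in_itv /= => /andP[ps _] /andP[pt _].
rewrite /two_point_param /three_point_param !ltNge ps pt /=.
by rewrite mulrA mulfV ?gt_eqF // mul1r subrr normr0 ltW.
Qed.

End BoxEstimates.

Definition blowup_limit (R : realType) (C : mmspace R) : Prop :=
  forall dC : R, 0 < dC -> exists2 X : mmspace R, nontrivial X &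
    forall dX M : R, 0 < dX -> exists (V : mmspace R) (t : R) (ht : 0 < t),
      [/\ nontrivial V, M <= t, box X V < dX & box C (scale ht V) < dC].

Section HomogeneousContinuous.
Variables (R : realType) (r : mmspace R -> R).
Hypothesis r_gt0 : forall X, nontrivial X -> 0 < r X.
Hypothesis r_cont : forall X, nontrivial X -> forall eps, 0 < eps ->
  exists2 delta, 0 < delta &
    forall Y, nontrivial Y -> box X Y < delta -> `|r X - r Y| < eps.
Hypothesis r_hom : forall (t : R) (ht : 0 < t) X, nontrivial X ->
  r (scale ht X) = t * r X.

Lemma not_blowup_limit (C : mmspace R) : nontrivial C -> ~ blowup_limit C.
Proof.
move=> ntC blowC.
have [dC dC_gt0 near_C] := r_cont ntC ltr01.
have [X ntX blowX] := blowC dC dC_gt0.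
have rX_gt0 := r_gt0 ntX.
have [dX dX_gt0 near_X] := r_cont ntX (divr_gt0 rX_gt0 (ltr0n _ 2)).
pose M := 2 * (r C + 1) / r X.
have M_rX : M * (r X / 2) = r C + 1.
  by rewrite mulrA mulfVK ?gt_eqF // mulrAC mulfV ?mul1r.
have M_gt0 : 0 < M by rewrite divr_gt0 // mulr_gt0 // addr_gt0 ?r_gt0.
have [V [t [ht [ntV Mt XV CW]]]] := blowX dX M dX_gt0.
have := near_X V ntV XV; rewrite ltr_distl => /andP[_ rX_lt].
have := near_C (scale ht V) ntV CW.
rewrite r_hom // ltr_distl => /andP[tV_lt _].
have : M * (r X / 2) <= M * r V by rewrite ler_pM2l //; lra.
have : M * r V <= t * r V by rewrite ler_pM2r //; lra.
lra.
Qed.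

End HomogeneousContinuous.

Lemma blowup_limit_two_point_half (R : realType) :
  blowup_limit (two_point (half_in_unit R)).
Proof.
move=> dC dC_gt0; pose p := Num.min (dC / 2) 4^-1.
have p_gt0 : 0 < p by rewrite lt_min divr_gt0 //=; lra.
have p_le_dC : p <= dC / 2 by rewrite ge_min lexx.
have p_le : p <= 4^-1 by rewrite ge_min lexx orbT.
have hp : 0 < p < 2^-1 by apply/andP; split; lra.
have hp1 : 0 < p < 1 by apply/andP; split; lra.
exists (two_point hp1); first exact: two_point_nontrivial.
move=> dX M dX_gt0; pose t := Num.max (Num.max M 1) (2 / dX).
have t_ge1 : 1 <= t by rewrite !le_max lexx orbT.
have ht : 0 < t by lra.
have heps : 0 < t^-1 <= 1 by rewrite invr_gt0 invf_le1 ?ht.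
exists (three_point hp heps), t, ht; split.
- exact: three_point_nontrivial.
- by rewrite !le_max lexx.
- apply: le_lt_trans (box_two_point_three_point hp1 hp heps) _.
  rewrite invf_plt //; apply: lt_le_trans (_ : 2 / dX <= t).
    by rewrite ltr_pMl ?invr_gt0 // ltr1n.
  by rewrite le_max lexx orbT.
- by apply: le_lt_trans (box_two_point_blowup hp ht heps) _; lra.
Qed.

Theorem corollary3p9 (R : realType) :
  ~ exists r : mmspace R -> R,
      [/\ (* r takes values in R_+ = (0, oo) on X_* *)
          forall X, nontrivial X -> 0 < r X,
          (* r is continuous on X_* for the box topology *)
          forall X, nontrivial X -> forall eps, 0 < eps ->
            exists2 delta, 0 < delta &
              forall Y, nontrivial Y -> box X Y < delta -> `|r X - r Y| < eps &
          (* r is 1-homogeneous *)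
          forall (t : R) (ht : 0 < t) X, nontrivial X ->
            r (scale ht X) = t * r X].
Proof.
move=> [r [r_gt0 r_cont r_hom]].
have ntC := two_point_nontrivial (half_in_unit R).
exact: (not_blowup_limit r_gt0 r_cont r_hom ntC
  (@blowup_limit_two_point_half R)).
Qed.
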